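(* Let $n\ge2$, $q\in\mathbb C$ a primitive $n$-th root of unity, and $u_q(sl_2)$ the $\mathbb C$-algebra with generators $K,E,F$ and relations $K^n=1$, $E^n=F^n=0$, $EK=qKE$, $FK=q^{-1}KF$, $EF-FE=\frac{K-K^{-1}}{q-q^{-1}}$, with basis $\{K^iF^jE^k:0\le i,j,k\le n-1\}$. Let $u\in u_q(sl_2)_0$ be invertible and write $u=u_K+\cdots$, where $u_K$ lies in the Cartan subalgebra spanned by $1,K,\dots,K^{n-1}$ and $\cdots$ denotes a linear combination of basis monomials $K^iF^jE^j$ with $j\ge1$. Then $u_K$ is invertible and $u^{-1}=u_K^{-1}+\cdots$, where again $\cdots$ denotes a linear combination of basis monomials $K^iF^jE^j$ with $j\ge1$.
   Context: $u_q(sl_2)_0$ denotes the degree-zero part of the $\mathbb Z/n\mathbb Z$-grading in which $K^iF^jE^k$ has degree $j-k$ mod $n$, i.e. the span of the monomials $K^iF^jE^j$, $0\le i,j\le n-1$. *)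

From HB Require Import structures.
From mathcomp Require Import all_boot all_order all_algebra.
From mathcomp Require Import complex.
From mathcomp Require Import reals.
Set Implicit Arguments. Unset Strict Implicit. Unset Printing Implicit Defensive.
Import Order.TTheory GRing.Theory Num.Theory.
Local Open Scope ring_scope.

Definition uq_mono (C : comNzRingType) (A : algType C) (K E F : A) (i j k : nat) : A :=
  K ^+ i * F ^+ j * E ^+ k.

(* (A, K, E, F) is a presentation of the small quantum group u_q(sl_2) over C:
   K^n = 1, E^n = F^n = 0, EK = qKE, FK = q^{-1}KF,
   EF - FE = (K - K^{-1})/(q - q^{-1})   (K^{-1} = K^(n-1) since K^n = 1),
   and {K^i F^j E^k : 0 <= i,j,k <= n-1} is a basis of A
   (every element has a unique expansion in these monomials). *)
Definition is_uq_sl2 (C : fieldType) (n : nat) (q : C) (A : algType C) (K E F : A) : Prop :=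
  K ^+ n = 1 /\ E ^+ n = 0 /\ F ^+ n = 0 /\
  E * K = q *: (K * E) /\ F * K = q^-1 *: (K * F) /\
  E * F - F * E = (q - q^-1)^-1 *: (K - K ^+ n.-1) /\
  (forall x : A, exists! c : 'I_n -> 'I_n -> 'I_n -> C,
        x = \sum_(i < n) \sum_(j < n) \sum_(k < n) c i j k *: uq_mono K E F i j k).

Definition is_inverse (A : nzRingType) (x y : A) : Prop := x * y = 1 /\ y * x = 1.

From HB Require Import structures.
From mathcomp Require Import all_boot all_order all_algebra.
From mathcomp Require Import complex.
From mathcomp Require Import reals.
Set Implicit Arguments. Unset Strict Implicit. Unset Printing Implicit Defensive.
Import Order.TTheory GRing.Theory Num.Theory.
Local Open Scope ring_scope.
Local Open Scope complex_scope.

(* Conjugation by K multiplies K^i F^j E^k by q^(k-j); as q is a primitive n-th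
   root of unity and the monomials form a basis, the elements commuting with K
   are the combinations of the K^i F^j E^j.  Now u commutes with K, hence so does
   v = u^-1, so v = v_K + v_N just as u = u_K + u_N.  In uv = 1 the error
   u_K v_K - 1 = -(u_K v_N + u_N v_K + u_N v_N) lies in the left ideal AE (E K = q K E
   lets E pass the Cartan factor v_K), whose elements involve only monomials with
   k >= 1 since E^n = 0; being also a combination of powers of K, it vanishes. *)

Section QCommute.
Variables (R : comNzRingType) (A : algType R) (a : R) (x y : A).
Hypothesis yx : y * x = a *: (x * y).

Lemma qcomm_exprl j : y ^+ j * x = a ^+ j *: (x * y ^+ j).
Proof.
elim: j => [|j IH]; first by rewrite !expr0 mul1r mulr1 scale1r.
by rewrite exprS -mulrA IH -scalerAr (mulrA y) yx -scalerAl scalerA -mulrA -exprS -exprSr.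
Qed.

Lemma qcomm_exprr i : y * x ^+ i = a ^+ i *: (x ^+ i * y).
Proof.
elim: i => [|i IH]; first by rewrite !expr0 mul1r mulr1 scale1r.
by rewrite exprSr mulrA IH -scalerAl -(mulrA _ y) yx -scalerAr scalerA mulrA -!exprSr.
Qed.
End QCommute.

Section SmallQuantumGroup.
Variables (C : fieldType) (n : nat) (q : C) (A : algType C) (K E F : A).
Hypothesis q_prim : n.-primitive_root q.
Hypothesis Kn : K ^+ n = 1.
Hypothesis En : E ^+ n = 0.
Hypothesis EK : E * K = q *: (K * E).
Hypothesis FK : F * K = q^-1 *: (K * F).

Local Notation m := (uq_mono K E F).

Definition mono_comb (c : 'I_n -> 'I_n -> 'I_n -> C) : A :=
  \sum_(i < n) \sum_(j < n) \sum_(k < n) c i j k *: m i j k.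

Hypothesis mono_basis : forall x : A, exists! c, x = mono_comb c.

Definition mono_span (P : 'I_n -> 'I_n -> 'I_n -> bool) (x : A) : Prop :=
  exists2 c, x = mono_comb c & forall i j k, ~~ P i j k -> c i j k = 0.

Let n_gt0 : (0 < n)%N := prim_order_gt0 q_prim.

Lemma prim_root_neq0 : q != 0.
Proof.
apply/eqP => q0; move: (prim_expr_order q_prim).
by rewrite q0 expr0n gtn_eqF // => /esym/eqP; rewrite oner_eq0.
Qed.

Lemma mono_comb_inj : injective mono_comb.
Proof.
move=> c1 c2 e; have [c [_ uniq_c]] := mono_basis (mono_comb c1).
by rewrite -(uniq_c c1 erefl) -(uniq_c c2 e).
Qed.

Lemma mono_comb_lin a c1 c2 :
  mono_comb (fun i j k => a * c1 i j k + c2 i j k) = a *: mono_comb c1 + mono_comb c2.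
Proof.
rewrite /mono_comb scaler_sumr -big_split; apply: eq_bigr => i _.
rewrite scaler_sumr -big_split; apply: eq_bigr => j _.
rewrite scaler_sumr -big_split; apply: eq_bigr => k _ /=.
by rewrite scalerDl scalerA.
Qed.

Lemma mono_comb_eq0 c : (forall i j k, c i j k = 0) -> mono_comb c = 0.
Proof.
move=> c0; rewrite /mono_comb big1 // => i _; rewrite big1 // => j _.
by rewrite big1 // => k _; rewrite c0 scale0r.
Qed.

Lemma mono_span0 P : mono_span P 0.
Proof. by exists (fun _ _ _ => 0); rewrite ?mono_comb_eq0. Qed.

Lemma mono_span_lin P a x y :
  mono_span P x -> mono_span P y -> mono_span P (a *: x + y).
Proof.
case=> [c1 -> c1P] [c2 -> c2P]; exists (fun i j k => a * c1 i j k + c2 i j k).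
  by rewrite mono_comb_lin.
by move=> i j k notP; rewrite c1P // c2P // mulr0 addr0.
Qed.

Lemma mono_spanD P x y : mono_span P x -> mono_span P y -> mono_span P (x + y).
Proof. by move=> Px Py; rewrite -[x]scale1r; apply: mono_span_lin. Qed.

Lemma mono_spanZ P a x : mono_span P x -> mono_span P (a *: x).
Proof. by move=> Px; rewrite -[_ *: _]addr0; apply: mono_span_lin Px (mono_span0 P). Qed.

Lemma mono_spanN P x : mono_span P x -> mono_span P (- x).
Proof. by rewrite -scaleN1r; apply: mono_spanZ. Qed.

Lemma mono_span_sum P (I : Type) (r : seq I) (Q : pred I) (f : I -> A) :
  (forall i, Q i -> mono_span P (f i)) -> mono_span P (\sum_(i <- r | Q i) f i).
Proof. by move=> Pf; apply: big_ind => //; [apply: mono_span0 | apply: mono_spanD]. Qed.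

Lemma mono_span_mono (P : 'I_n -> 'I_n -> 'I_n -> bool) i j k :
  P i j k -> mono_span P (m i j k).
Proof.
move=> Pijk; pose c i' j' k' : C := if (i' == i) && (j' == j) && (k' == k) then 1 else 0.
exists c; last first.
  move=> i' j' k'; rewrite /c; case: ifP => // /andP [/andP [/eqP -> /eqP ->] /eqP ->].
  by rewrite Pijk.
rewrite /mono_comb (bigD1 i) //= [X in _ + X]big1 => [|i' /negbTE i'i]; last first.
  by rewrite big1 // => j' _; rewrite big1 // => k' _; rewrite /c i'i scale0r.
rewrite addr0 (bigD1 j) //= [X in _ + X]big1 => [|j' /negbTE j'j]; last first.
  by rewrite big1 // => k' _; rewrite /c j'j andbF scale0r.
rewrite addr0 (bigD1 k) //= [X in _ + X]big1 => [|k' /negbTE k'k]; last first.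
  by rewrite /c k'k andbF scale0r.
by rewrite /c !eqxx scale1r !addr0.
Qed.

Lemma mono_span_disjoint P Q x :
  (forall i j k, ~~ (P i j k && Q i j k)) -> mono_span P x -> mono_span Q x -> x = 0.
Proof.
move=> PQ [c1 x1 c1P] [c2 x2 c2Q]; have c12 := mono_comb_inj (etrans (esym x1) x2).
rewrite x1 mono_comb_eq0 // => i j k.
by have /nandP[/c1P | /c2Q] := PQ i j k; rewrite ?c12.
Qed.

Lemma prim_expr_div_eq1 (j k : 'I_n) : (q ^+ k / q ^+ j == 1) = (k == j).
Proof.
apply/eqP/eqP => [/divr1_eq/eqP | ->]; last by rewrite divff // expf_neq0 // prim_root_neq0.
by rewrite (eq_prim_root_expr q_prim) !modn_small // => /eqP/val_inj.
Qed.

Lemma mono_mulK i j k : m i j k * K = (q ^+ k / q ^+ j) *: (K * m i j k).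
Proof.
rewrite /uq_mono -mulrA (qcomm_exprl EK) -scalerAr -(mulrA (K ^+ i)) (mulrA (F ^+ j)).
by rewrite (qcomm_exprl FK) exprVn -scalerAl -scalerAr scalerA mulrC !mulrA -exprS -exprSr.
Qed.

Lemma mono_comb_mulK c :
  mono_comb c * K = K * mono_comb (fun i j k => q ^+ k / q ^+ j * c i j k).
Proof.
rewrite /mono_comb mulr_suml mulr_sumr; apply: eq_bigr => i _.
rewrite mulr_suml mulr_sumr; apply: eq_bigr => j _.
rewrite mulr_suml mulr_sumr; apply: eq_bigr => k _.
by rewrite -scalerAl mono_mulK -scalerAr scalerA mulrC.
Qed.

Lemma K_lreg : GRing.lreg K.
Proof.
have KV : K ^+ n.-1 * K = 1 by rewrite -exprSr prednK.
by move=> x y Kxy; rewrite -[x]mul1r -[y]mul1r -KV -!mulrA Kxy.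
Qed.

Definition deg0 (c : 'I_n -> 'I_n -> C) : A :=
  \sum_(i < n) \sum_(j < n) c i j *: m i j j.
Definition cartan_part (c : 'I_n -> 'I_n -> C) : A :=
  \sum_(i < n) \sum_(j < n | nat_of_ord j == 0%N) c i j *: K ^+ i.
Definition higher_part (c : 'I_n -> 'I_n -> C) : A :=
  \sum_(i < n) \sum_(j < n | (0 < j)%N) c i j *: m i j j.

Lemma commute_K_deg0 x : x * K = K * x -> exists d, x = deg0 d.
Proof.
move=> xK; have [c [xc _]] := mono_basis x.
have cK : (fun i j k : 'I_n => q ^+ k / q ^+ j * c i j k) = c.
  by apply: mono_comb_inj; apply: K_lreg; rewrite -mono_comb_mulK -xc.
have c_diag i j k : j != k -> c i j k = 0.
  move=> jk; have /eqP := congr1 (fun f => f i j k) cK.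
  rewrite -subr_eq0 -{2}[c i j k]mul1r -mulrBl mulf_eq0 subr_eq0 prim_expr_div_eq1.
  by rewrite [k == j]eq_sym (negbTE jk) => /eqP.
exists (fun i j => c i j j); rewrite xc; apply: eq_bigr => i _; apply: eq_bigr => j _.
by rewrite (bigD1 j) //= big1 ?addr0 // => k kj; rewrite c_diag ?scale0r // eq_sym.
Qed.

Lemma deg0_mulK c : deg0 c * K = K * deg0 c.
Proof.
rewrite /deg0 mulr_suml mulr_sumr; apply: eq_bigr => i _.
rewrite mulr_suml mulr_sumr; apply: eq_bigr => j _.
by rewrite -scalerAl mono_mulK divff ?scale1r ?scalerAr // expf_neq0 // prim_root_neq0.
Qed.

Lemma deg0_split c : deg0 c = cartan_part c + higher_part c.
Proof.
rewrite /deg0 /cartan_part /higher_part -big_split; apply: eq_bigr => i _.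
rewrite (bigID (fun j : 'I_n => nat_of_ord j == 0%N)) /=; congr (_ + _).
  by apply: eq_bigr => j /eqP j0; rewrite /uq_mono j0 !expr0 !mulr1.
by apply: eq_bigl => j; rewrite lt0n.
Qed.

Local Notation cartan_idx := (fun (_ j k : 'I_n) => (j == 0 :> nat) && (k == 0 :> nat)).

Lemma mono_span_Kexpr e : mono_span cartan_idx (K ^+ e).
Proof.
have lt_e : (e %% n < n)%N by rewrite ltn_pmod.
pose z : 'I_n := Ordinal n_gt0.
have -> : K ^+ e = m (Ordinal lt_e) z z.
  by rewrite /uq_mono /= !expr0 !mulr1 {1}(divn_eq e n) exprD mulnC exprM Kn expr1n mul1r.
exact: mono_span_mono.
Qed.

Lemma cartan_part_mul_span a b : mono_span cartan_idx (cartan_part a * cartan_part b).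
Proof.
rewrite /cartan_part mulr_suml; apply: mono_span_sum => i _.
rewrite mulr_suml; apply: mono_span_sum => j _.
rewrite mulr_sumr; apply: mono_span_sum => i' _.
rewrite mulr_sumr; apply: mono_span_sum => j' _.
by rewrite -scalerAl -scalerAr -exprD; do 2 apply: mono_spanZ; apply: mono_span_Kexpr.
Qed.

Definition in_AE (x : A) : Prop := exists z, x = z * E.

Lemma in_AE_add x y : in_AE x -> in_AE y -> in_AE (x + y).
Proof. by move=> [z ->] [z' ->]; exists (z + z'); rewrite mulrDl. Qed.

Lemma in_AE_opp x : in_AE x -> in_AE (- x).
Proof. by move=> [z ->]; exists (- z); rewrite mulNr. Qed.

Lemma in_AE_mull y x : in_AE x -> in_AE (y * x).
Proof. by move=> [z ->]; exists (y * z); rewrite mulrA. Qed.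

Lemma in_AE_sum (I : Type) (r : seq I) (P : pred I) (f : I -> A) :
  (forall i, P i -> in_AE (f i)) -> in_AE (\sum_(i <- r | P i) f i).
Proof.
move=> AEf; apply: big_ind => //; last exact: in_AE_add.
by exists 0; rewrite mul0r.
Qed.

Lemma in_AE_mulKX x i : in_AE x -> in_AE (x * K ^+ i).
Proof.
move=> [z ->]; exists (q ^+ i *: (z * K ^+ i)).
by rewrite -mulrA (qcomm_exprr EK) -scalerAr -scalerAl mulrA.
Qed.

Lemma in_AE_mul_cartan x b : in_AE x -> in_AE (x * cartan_part b).
Proof.
move=> AEx; rewrite /cartan_part mulr_sumr; apply: in_AE_sum => i _.
rewrite mulr_sumr; apply: in_AE_sum => j _.
by rewrite -scalerAr -mulr_algl; apply/in_AE_mull/in_AE_mulKX.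
Qed.

Lemma higher_part_in_AE c : in_AE (higher_part c).
Proof.
apply: in_AE_sum => i _; apply: in_AE_sum => j j_gt0.
rewrite -mulr_algl; apply: in_AE_mull; exists (K ^+ i * F ^+ j * E ^+ j.-1).
by rewrite /uq_mono -[RHS]mulrA -exprSr prednK.
Qed.

Lemma in_AE_span x : in_AE x -> mono_span (fun _ _ k => (0 < k)%N) x.
Proof.
case=> z ->; have [c [-> _]] := mono_basis z.
rewrite /mono_comb mulr_suml; apply: mono_span_sum => i _.
rewrite mulr_suml; apply: mono_span_sum => j _.
rewrite mulr_suml; apply: mono_span_sum => k _.
rewrite -scalerAl; apply: mono_spanZ; rewrite /uq_mono -(mulrA _ (E ^+ k)) -exprSr.
have [lt_k1n | ge_k1n] := ltnP k.+1 n; first exact: (@mono_span_mono _ i j (Ordinal lt_k1n)).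
have -> : k.+1 = n by apply/eqP; rewrite eqn_leq ge_k1n ltn_ord.
by rewrite En mulr0; apply: mono_span0.
Qed.

Lemma cartan_part_mul_eq1 a b :
  deg0 a * deg0 b = 1 -> cartan_part a * cartan_part b = 1.
Proof.
rewrite !deg0_split mulrDl !mulrDr => ab1.
have AE_err : in_AE (cartan_part a * cartan_part b - 1).
  rewrite -ab1 -addrA opprD addrA subrr add0r; apply: in_AE_opp.
  apply: in_AE_add; first exact/in_AE_mull/higher_part_in_AE.
  apply: in_AE_add; first exact/in_AE_mul_cartan/higher_part_in_AE.
  exact/in_AE_mull/higher_part_in_AE.
have cartan_err : mono_span cartan_idx (cartan_part a * cartan_part b - 1).
  apply: mono_spanD (cartan_part_mul_span a b) (mono_spanN _).
  by rewrite -(expr0 K); apply: mono_span_Kexpr.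
apply: subr0_eq; apply: mono_span_disjoint cartan_err (in_AE_span AE_err) => i j k.
by rewrite lt0n -andbA andbN andbF.
Qed.

Lemma deg0_inverse c v : is_inverse (deg0 c) v ->
  exists2 d, is_inverse (cartan_part c) (cartan_part d) & v = cartan_part d + higher_part d.
Proof.
case=> uv vu.
have vK : v * K = K * v.
  by rewrite -[v * K]mulr1 -uv mulrA -(mulrA v) -deg0_mulK !mulrA vu mul1r.
have [d vd] := commute_K_deg0 vK.
exists d; last by rewrite vd deg0_split.
by split; apply: cartan_part_mul_eq1; rewrite -vd.
Qed.

End SmallQuantumGroup.

Theorem mainTheorem8 (R : realType) (n : nat) (q : R[i])
  (A : algType R[i]) (K E F : A)
  (c : 'I_n -> 'I_n -> R[i]) (v : A) :
  (2 <= n)%N ->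
  n.-primitive_root q ->
  is_uq_sl2 n q K E F ->
  (* u lies in the degree-zero part, u = sum c_ij K^i F^j E^j *)
  let u := \sum_(i < n) \sum_(j < n) c i j *: uq_mono K E F i j j in
  (* u_K = its Cartan component *)
  let uK := \sum_(i < n) \sum_(j < n | nat_of_ord j == 0%N) c i j *: K ^+ i in
  is_inverse u v ->
  exists w : A,
    is_inverse uK w /\
    (exists d : 'I_n -> 'I_n -> R[i],
       v = w + \sum_(i < n) \sum_(j < n | (0 < j)%N) d i j *: uq_mono K E F i j j).
Proof.
move=> _ q_prim [Kn [En [_ [EK [FK [_ basis]]]]]] u uK uv.
have [d uK_inv ->] := deg0_inverse q_prim Kn En EK FK basis uv.
by exists (cartan_part K d); split=> //; exists d.
Qed.
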